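(* For every integer $q\equiv 4\pmod 6$ there exists a $q$-ary $3$-frameproof code of length $5$ and cardinality $\frac{5}{3}(q-1)^2+1$.
   Context: For $P\subseteq F^l$ over a finite alphabet $F$, $desc(P)=\{x\in F^l: \text{for every } i\in\{1,\ldots,l\} \text{ there is } y\in P \text{ with } x_i=y_i\}$. For an integer $c\geq 2$, a $c$-frameproof code of length $l$ is a subset $C\subseteq F^l$ with $desc(P)\cap C=P$ for every $P\subseteq C$ with $|P|\leq c$; it is $q$-ary if $|F|=q$. *)

From mathcomp Require Import all_boot.
Set Implicit Arguments. Unset Strict Implicit. Unset Printing Implicit Defensive.

Definition word (F : finType) (l : nat) := {ffun 'I_l -> F}.

Definition desc (F : finType) (l : nat) (P : {set word F l}) : {set word F l} :=
  [set x : word F l | [forall i : 'I_l, [exists y in P, x i == y i]]].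

Definition frameproof (F : finType) (l c : nat) (C : {set word F l}) : Prop :=
  forall P : {set word F l}, P \subset C -> #|P| <= c -> desc P :&: C = P.

(* Write q = 3m + 1 with m odd.  Besides the zero word, the code has one word for each
   (p, u, a, b) in Z_5 x Z_3 x Z_m x Z_m: it is 0 at position p, and at every position i <> p
   it carries the pair (u + offset p i, L_(i-p)(a, b)), where L_1, ..., L_4 are the forms
   a, b, a + b, a + 2b.  Any two of these forms determine (a, b) modulo m, and the offset
   table is such that labels at two positions outside {p, p'} determine (p, u).  So every
   codeword x has a set of at least four positions (its nonzero ones, or all five for the
   zero word) on which any other codeword agrees with x at most once; covering x
   coordinatewise by codewords other than x therefore takes at least four of them. *)

From mathcomp Require Import all_boot all_algebra.
From mathcomp Require Import ring zify.
Set Implicit Arguments. Unset Strict Implicit. Unset Printing Implicit Defensive.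
Import GRing.Theory.

Definition agree_le1 (l : nat) (F : Type) (S : {set 'I_l}) (x y : 'I_l -> F) :=
  forall i j, i \in S -> j \in S -> x i = y i -> x j = y j -> i = j.

Section Frameproof.
Variables (F : finType) (l : nat).
Implicit Types (x y : word F l) (P C : {set word F l}) (S : {set 'I_l}).

Lemma mem_desc P x : x \in P -> x \in desc P.
Proof. by move=> xP; rewrite inE; apply/forallP => i; apply/existsP; exists x; rewrite xP /=. Qed.

Lemma agree_le1_neq S x y : 1 < #|S| -> agree_le1 S x y -> x != y.
Proof.
case/card_gt1P => i [j] [iS jS ij] hS; apply/eqP => exy.
by move/eqP: ij; apply; apply: hS; rewrite ?exy.
Qed.

Lemma card_desc_agree_le1 P S x :
  x \in desc P -> (forall y, y \in P -> agree_le1 S x y) -> #|S| <= #|P|.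
Proof.
rewrite inE => /forallP hx hP.
pose cover i := odflt x [pick y in P | x i == y i].
have coverP i : cover i \in P /\ x i = cover i i.
  rewrite /cover; case: pickP => [y /andP[-> /eqP ->] | none] //=.
  by have /existsP[y /andP[yP /eqP xy]] := hx i; move: (none y); rewrite yP xy eqxx.
have cover_inj : {in S &, injective cover}.
  move=> i j iS jS eij; have [yP xi] := coverP i; have [_ xj] := coverP j.
  by apply: (hP _ yP) => //; rewrite eij.
rewrite -(card_in_imset cover_inj); apply: subset_leq_card.
by apply/subsetP => _ /imsetP[i _ ->]; case: (coverP i).
Qed.

Lemma frameproof_agree_le1 c C :
  (forall x, x \in C -> exists2 S : {set 'I_l}, c < #|S| &
     forall y, y \in C -> y != x -> agree_le1 S x y) ->
  frameproof c C.
Proof.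
move=> hC P sPC cardP; apply/setP => x; rewrite inE.
apply/andP/idP => [[xd xC] | xP]; last by rewrite mem_desc // (subsetP sPC).
apply: contraT => xNP; have [S cS hS] := hC x xC.
suff : #|S| <= #|P| by rewrite leqNgt (leq_ltn_trans cardP cS).
apply: (card_desc_agree_le1 xd) => y yP; apply: hS; first exact: (subsetP sPC).
by apply: contraNneq xNP => <-.
Qed.

End Frameproof.

Lemma eqz_mod_lin2 (m c1 c2 d1 d2 a b a' b' : int) :
  coprimez m (c1 * d2 - c2 * d1) ->
  (c1 * a + c2 * b == c1 * a' + c2 * b' %[mod m])%Z ->
  (d1 * a + d2 * b == d1 * a' + d2 * b' %[mod m])%Z ->
  (a == a' %[mod m])%Z && (b == b' %[mod m])%Z.
Proof.
rewrite !eqz_mod_dvd => det_m m_X m_Y.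
have m_comb (u v : int) : (m %| (u * (c1 * a + c2 * b - (c1 * a' + c2 * b'))
                                 + v * (d1 * a + d2 * b - (d1 * a' + d2 * b')))%R)%Z.
  by rewrite rpredD ?dvdz_mull.
apply/andP; split; rewrite -(Gauss_dvdzr _ det_m).
  by have := m_comb d2 (- c2)%R; congr (_ %| _)%Z; ring.
by have := m_comb (- d1)%R c1; congr (_ %| _)%Z; ring.
Qed.

Section LinearForms.
Variables (m : nat) (m_odd : odd m).

Let m_gt0 : 0 < m. Proof. by case: m m_odd. Qed.

Lemma eqz_mod_nat (x y : nat) : x = y %[mod m] -> (x%:Z == y%:Z %[mod m%:Z])%Z.
Proof. by move=> e; rewrite !modz_nat e. Qed.

Lemma ord_eqz_mod (x y : 'I_m) : (x%:Z == y%:Z %[mod m%:Z])%Z -> x = y.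
Proof. by rewrite !modz_nat !modn_small // => /eqP[/val_inj]. Qed.

(* Any two of the forms a, b, a + b, a + 2b determine (a, b) modulo an odd m;
   [coef 0] is a junk value, never used. *)
Definition coef (k : 'I_5) : nat * nat :=
  match val k with 1 => (1, 0) | 2 => (0, 1) | 3 => (1, 1) | _ => (1, 2) end.

Definition form (k : 'I_5) (a b : 'I_m) : 'I_m :=
  Ordinal (ltn_pmod ((coef k).1 * a + (coef k).2 * b) m_gt0).

Lemma coef_det_coprime (k l : 'I_5) : k != 0%R -> l != 0%R -> k != l ->
  coprimez m ((coef k).1%:Z * (coef l).2%:Z - (coef k).2%:Z * (coef l).1%:Z)%R.
Proof.
move=> k0 l0 kl; rewrite coprimezE absz_nat.
suff: `|((coef k).1%:Z * (coef l).2%:Z - (coef k).2%:Z * (coef l).1%:Z)%R|%N \in [:: 1; 2].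
  by rewrite !inE => /orP[] /eqP ->; rewrite ?coprimen1 // coprime_sym coprime2n.
by move: k l k0 l0 kl => [[|[|[|[|[|?]]]]] ?] [[|[|[|[|[|?]]]]] ?].
Qed.

Lemma form_sep (k l : 'I_5) (a b a' b' : 'I_m) : k != 0%R -> l != 0%R -> k != l ->
  form k a b = form k a' b' -> form l a b = form l a' b' -> a = a' /\ b = b'.
Proof.
move=> k0 l0 kl /(congr1 val) /eqz_mod_nat ek /(congr1 val) /eqz_mod_nat el.
rewrite !PoszD !PoszM in ek el.
have /andP[ea eb] := eqz_mod_lin2 (coef_det_coprime k0 l0 kl) ek el.
by split; apply: ord_eqz_mod.
Qed.

End LinearForms.

Definition offset (p i : 'I_5) : 'I_3 :=
  inZp (nth 0 (nth [::] [:: [:: 0; 0; 0; 0; 0]; [:: 0; 0; 0; 1; 2]; [:: 0; 0; 0; 2; 1];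
                             [:: 0; 1; 2; 0; 0]; [:: 0; 2; 1; 0; 0]] p) i).

Lemma offset_diff_inj (p p' i j : 'I_5) : p != p' -> i != j ->
  i \notin [:: p; p'] -> j \notin [:: p; p'] ->
  (offset p i - offset p' i != offset p j - offset p' j)%R.
Proof.
by move: p p' i j => [[|[|[|[|[|?]]]]] ?] [[|[|[|[|[|?]]]]] ?]
                      [[|[|[|[|[|?]]]]] ?] [[|[|[|[|[|?]]]]] ?].
Qed.

Definition label (p : 'I_5) (u : 'I_3) (i : 'I_5) : 'I_3 := (u + offset p i)%R.

Lemma label_sep (p p' : 'I_5) (u u' : 'I_3) (i j : 'I_5) : i != j ->
  i \notin [:: p; p'] -> j \notin [:: p; p'] ->
  label p u i = label p' u' i -> label p u j = label p' u' j -> p = p' /\ u = u'.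
Proof.
rewrite /label => ij ip jp ei ej; case: (eqVneq p p') => [pp' | pp'].
  by split=> //; apply: (addIr (offset p i)); rewrite ei pp'.
have diff_u k : (u + offset p k = u' + offset p' k -> u' - u = offset p k - offset p' k)%R.
  by move=> e; rewrite -[offset p k](addKr u) e; ring.
by move: (offset_diff_inj pp' ij ip jp); rewrite -(diff_u _ ei) -(diff_u _ ej) eqxx.
Qed.

Section Code.
Variables (m : nat) (m_odd : odd m).

Definition param := ('I_5 * 'I_3 * 'I_m * 'I_m)%type.
Definition symbol := option ('I_3 * 'I_m).

Definition coord (t : option param) (i : 'I_5) : symbol :=
  if t is Some (p, u, a, b) then
    if i == p then None else Some (label p u i, form m_odd (i - p)%R a b)
  else None.

Definition support (t : option param) : {set 'I_5} :=
  if t is Some (p, _, _, _) then [set~ p] else [set: 'I_5].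

Lemma card_support t : 3 < #|support t|.
Proof. by case: t => [[[[p u] a] b]|]; rewrite /= ?cardsC1 ?cardsT card_ord. Qed.

Lemma coord_agree_le1 t t' : t != t' -> agree_le1 (support t) (coord t) (coord t').
Proof.
case: t t' => [[[[p u] a] b]|] [[[[p' u'] a'] b']|] //= tt' i j; rewrite /coord ?inE.
- move=> ip jp; rewrite (negbTE ip) (negbTE jp).
  case: (i =P p') => [// | /eqP ip']; case: (j =P p') => [// | /eqP jp'].
  move=> /Some_inj/pair_equal_spec[eli efi] /Some_inj/pair_equal_spec[elj efj].
  apply/eqP; apply: contraNT tt' => ij.
  have ipp' : i \notin [:: p; p'] by rewrite !inE negb_or ip ip'.
  have jpp' : j \notin [:: p; p'] by rewrite !inE negb_or jp jp'.
  have [pp' uu'] := label_sep ij ipp' jpp' eli elj; subst p' u'.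
  have [||| <- <-] // := form_sep (k := (i - p)%R) (l := (j - p)%R) _ _ _ efi efj.
  + by rewrite subr_eq0.
  + by rewrite subr_eq0.
  + by apply: contraNneq ij => /addIr ->.
- by move=> ip _; rewrite (negbTE ip).
- by move=> _ _; case: (i =P p') => [-> | //]; case: (j =P p') => [-> | //].
Qed.

Lemma card_symbol : #|{: symbol}| = (3 * m).+1.
Proof. by rewrite card_option card_prod !card_ord. Qed.

(* Any bijection of the symbols onto 'I_(3m+1) would do. *)
Definition encode (s : symbol) : 'I_(3 * m).+1 := cast_ord card_symbol (enum_rank s).

Lemma encode_inj : injective encode.
Proof. exact: inj_comp (@cast_ord_inj _ _ _) (@enum_rank_inj _). Qed.

Definition codeword (t : option param) : word 'I_(3 * m).+1 5 :=
  [ffun i => encode (coord t i)].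

Lemma codeword_agree_le1 t t' : t != t' ->
  agree_le1 (support t) (codeword t) (codeword t').
Proof.
move=> /coord_agree_le1 h i j iS jS; rewrite !ffunE => /encode_inj ei /encode_inj ej.
exact: h.
Qed.

Lemma codeword_inj : injective codeword.
Proof.
move=> t t' e; apply/eqP; apply: contraT => tt'.
have := agree_le1_neq (ltnW (ltnW (card_support t))) (codeword_agree_le1 tt').
by rewrite e eqxx.
Qed.

Definition code : {set word 'I_(3 * m).+1 5} := [set codeword t | t : option param].

Lemma card_code : #|code| = (5 * 3 * m * m).+1.
Proof. by rewrite card_imset ?card_option ?card_prod ?card_ord //; exact: codeword_inj. Qed.

Lemma code_frameproof : frameproof 3 code.
Proof.
apply: frameproof_agree_le1 => _ /imsetP[t _ ->].
exists (support t); first exact: card_support.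
move=> _ /imsetP[t' _ ->] ne; apply: codeword_agree_le1.
by apply: contraNneq ne => ->.
Qed.

End Code.

Theorem theorem3 (q : nat) :
  q %% 6 = 4 ->
  exists C : {set word 'I_q 5},
    frameproof 3 C /\ 3 * #|C| = 5 * (q - 1) ^ 2 + 3.
Proof.
move=> q_mod6; pose m := (q %/ 6).*2.+1.
have m_odd : odd m by rewrite /= odd_double.
have -> : q = (3 * m).+1 by rewrite {1}(divn_eq q 6) q_mod6 /m; lia.
exists (code m_odd); split; first exact: code_frameproof.
rewrite card_code subn1 /=; nia.
Qed.
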